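(* Let $\Sigma=(\sigma_1,\dots,\sigma_k)$ be a uniformly primitive mixed substitution system on a finite set of prototiles $\mathcal{F}$ in $\mathbb{R}^d$. Then $\mathbb{Y}_{\Sigma,\Omega}=\mathbb{Y}_{\Sigma,w}$ for every $w\in\widetilde\Omega$.
   Context: Tiles are compact sets equal to the closure of their interior; patches are tessellations of bounded sets by tiles with pairwise disjoint interiors, tilings are tessellations of $\mathbb{R}^d$. $\mathcal{F}=\{T_1,\dots,T_n\}$ is a finite set of prototiles, a tile of type $i$ is a translate of $T_i$, and $\mathcal{F}^*$ is the set of patches of translates of prototiles up to translation. A substitution rule with inflation factor $\xi>1$ is a map $\sigma:\mathcal{F}\to\mathcal{F}^*$ with $\operatorname{supp}\sigma(T_i)=\xi T_i$, extended to patches tile by tile ($T_i+t\mapsto\sigma(T_i)+\xi t$); it is primitive if some power of its substitution matrix (entries $a_{ij}=$ number of tiles of type $i$ in $\sigma(T_j)$) is strictly positive. A mixed substitution system is a tuple $\Sigma=(\sigma_1,\dots,\sigma_k)$ of primitive substitution rules on $\mathcal{F}$. Let $\mathcal{A}=\{1,\dots,k\}$, $\Omega=\mathcal{A}^{\mathbb{N}}$, and $w(m)=(w_1,\dots,w_m)$ for $w\in\Omega$. For a finite word $a=(a_1,\dots,a_m)$ define the left action $a.P=\sigma_{a_1}(\sigma_{a_2}(\cdots\sigma_{a_m}(P)\cdots))$ and the right action $P.a=\sigma_{a_m}(\sigma_{a_{m-1}}(\cdots\sigma_{a_1}(P)\cdots))$. $\Sigma$ is uniformly primitive if there is $m_0$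 such that for every $a\in\mathcal{A}^{m_0}$ and every $T\in\mathcal{F}$ the patch $a.T$ contains tiles of all types. For $w\in\Omega$ let $\mathcal{R}_w=\{T.w(m):T\in\mathcal{F},m\in\mathbb{N}\}$, and let $\mathbb{Y}_{\Sigma,w}$ be the set of tilings $\mathcal{T}$ of $\mathbb{R}^d$ such that every finite patch of $\mathcal{T}$ is a translate of a sub-patch of some element of $\mathcal{R}_w$; $\mathbb{Y}_{\Sigma,\Omega}=\bigcup_{w\in\Omega}\mathbb{Y}_{\Sigma,w}$. $\widetilde\Omega\subset\Omega$ is the set of infinite words containing every finite word over $\mathcal{A}$ as a block of consecutive letters. *)

From HB Require Import structures.
From mathcomp Require Import all_boot all_order all_algebra.
From mathcomp Require Import all_classical all_reals all_analysis.
Set Implicit Arguments. Unset Strict Implicit. Unset Printing Implicit Defensive.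
Import Order.TTheory GRing.Theory Num.Theory.
Import numFieldNormedType.Exports.
Local Open Scope classical_set_scope.
Local Open Scope ring_scope.

Section Tilings.
Variables (R : realType) (d : nat).
Local Notation point := 'rV[R]_d.

Definition translate (A : set point) (t : point) : set point :=
  (fun x => x + t) @` A.
Definition dilate (xi : R) (A : set point) : set point :=
  (fun x => xi *: x) @` A.

Definition is_tile (A : set point) : Prop :=
  [/\ compact A, closure (interior A) = A & A !=set0].

Variable n : nat.
Variable T : 'I_n -> set point.

(* A tile of type i is a translate T_i + t; it is encoded by the pair (i, t). *)
Definition tile := ('I_n * point)%type.
Definition supp_tile (x : tile) : set point := translate (T x.1) x.2.
Definition shift_tile (u : point) (x : tile) : tile := (x.1, x.2 + u).

Definition is_patch (P : seq tile) : Prop :=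
  forall (p q : nat) (x y : tile), onth P p = Some x -> onth P q = Some y ->
    p <> q -> interior (supp_tile x) `&` interior (supp_tile y) = set0.

Definition supp_patch (P : seq tile) : set point :=
  \bigcup_(x in [set x | x \in P]) supp_tile x.

Definition shift_patch (u : point) (P : seq tile) : seq tile :=
  map (shift_tile u) P.

Definition is_tiling (Ti : set tile) : Prop :=
  (forall x y, Ti x -> Ti y -> x <> y ->
     interior (supp_tile x) `&` interior (supp_tile y) = set0) /\
  \bigcup_(x in Ti) supp_tile x = setT.

Definition is_subst_rule (xi : R) (sigma : 'I_n -> seq tile) : Prop :=
  1 < xi /\
  forall i, is_patch (sigma i) /\ supp_patch (sigma i) = dilate xi (T i).

Definition subst_patch (xi : R) (sigma : 'I_n -> seq tile) (P : seq tile)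
  : seq tile :=
  flatten [seq shift_patch (xi *: x.2) (sigma x.1) | x <- P].

Definition subst_matrix (sigma : 'I_n -> seq tile) : 'M[int]_n :=
  \matrix_(i < n, j < n) (count (fun x : tile => x.1 == i) (sigma j))%:Z.

Definition primitive_subst (sigma : 'I_n -> seq tile) : Prop :=
  exists p : nat, forall i j,
    0 < (iter p (mulmx (subst_matrix sigma)) 1%:M) i j.

Variable k : nat.
Variable xi : 'I_k -> R.
Variable sigma : 'I_k -> 'I_n -> seq tile.

Definition mixed_subst_system : Prop :=
  forall l, is_subst_rule (xi l) (sigma l) /\ primitive_subst (sigma l).

Definition sub_step (l : 'I_k) (P : seq tile) : seq tile :=
  subst_patch (xi l) (sigma l) P.

Definition left_act (a : seq 'I_k) (P : seq tile) : seq tile :=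
  foldr sub_step P a.
Definition right_act (P : seq tile) (a : seq 'I_k) : seq tile :=
  foldl (fun Q l => sub_step l Q) P a.

Definition proto_patch (i : 'I_n) : seq tile := [:: (i, 0)].

Definition uniformly_primitive : Prop :=
  exists m0 : nat, forall a : seq 'I_k, size a = m0 ->
    forall (i j : 'I_n), exists x, x \in left_act a (proto_patch i) /\ x.1 = j.

(* infinite words w in Omega = A^N, w(m) = (w_1, ..., w_m) *)
Definition prefix_word (w : nat -> 'I_k) (m : nat) : seq 'I_k :=
  map w (iota 0 m).

Definition R_w (w : nat -> 'I_k) : set (seq tile) :=
  [set P | exists (i : 'I_n) (m : nat), P = right_act (proto_patch i) (prefix_word w m)].

Definition Y_w (w : nat -> 'I_k) : set (set tile) :=
  [set Ti | is_tiling Ti /\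
    forall P : seq tile, (forall x, x \in P -> Ti x) ->
      exists Q t, R_w w Q /\ forall x, x \in P -> shift_tile t x \in Q].

Definition Y_Omega : set (set tile) :=
  \bigcup_(w in [set: nat -> 'I_k]) Y_w w.

Definition Omega_tilde : set (nat -> 'I_k) :=
  [set w | forall s : seq 'I_k, exists j : nat,
     forall l, (l < size s)%N -> w (j + l)%N = nth (w 0%N) s l].

End Tilings.

From HB Require Import structures.
From mathcomp Require Import all_boot all_order all_algebra.
From mathcomp Require Import all_classical all_reals all_analysis.
Set Implicit Arguments. Unset Strict Implicit. Unset Printing Implicit Defensive.
Import GRing.Theory.
Local Open Scope classical_set_scope.
Local Open Scope ring_scope.

(* Proof idea: let Ti lie in Y_v and let a patch of Ti sit, up to translation,
   inside T_i.v(m).  Pick any word a of length m0.  Since w contains the block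
   a v(m) at some position J, we have T_i.w(J + m0 + m) = ((T_i.w(J)).a).v(m).
   The patch T_i.w(J) contains some tile, so by uniform primitivity its image
   under a contains a tile of type i; substituting by v(m) is monotone for
   inclusion up to translation, hence T_i.v(m) sits inside T_i.w(J + m0 + m),
   and Ti lies in Y_w. *)

Section Embedding.
Variables (R : realType) (d n : nat).

Definition embeds (P Q : seq (tile R d n)) : Prop :=
  exists u, forall x, x \in P -> shift_tile u x \in Q.

Lemma embeds_trans (P Q S : seq (tile R d n)) :
  embeds P Q -> embeds Q S -> embeds P S.
Proof.
move=> [u PQ] [v QS]; exists (u + v) => x /PQ /QS.
by rewrite /shift_tile /= addrA.
Qed.

Lemma proto_patch_embeds (x : tile R d n) (P : seq (tile R d n)) :
  x \in P -> embeds (proto_patch R d x.1) P.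
Proof.
move=> xP; exists x.2 => y; rewrite inE => /eqP ->.
by rewrite /shift_tile /= add0r -surjective_pairing.
Qed.

Variables (k : nat) (xi : 'I_k -> R) (sigma : 'I_k -> 'I_n -> seq (tile R d n)).

Lemma embeds_sub_step (l : 'I_k) (P Q : seq (tile R d n)) :
  embeds P Q -> embeds (sub_step xi sigma l P) (sub_step xi sigma l Q).
Proof.
move=> [u PQ]; exists (xi l *: u) => y.
rewrite /sub_step /subst_patch => /flattenP [_ /mapP [x xP ->] /mapP [z zx ->]].
apply/flattenP; exists (shift_patch (xi l *: (x.2 + u)) (sigma l x.1)).
  by apply/mapP; exists (shift_tile u x); first exact: PQ.
by apply/mapP; exists z; rewrite // /shift_tile /= scalerDr addrA.
Qed.

Lemma embeds_left_act (a : seq 'I_k) (P Q : seq (tile R d n)) :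
  embeds P Q -> embeds (left_act xi sigma a P) (left_act xi sigma a Q).
Proof. by elim: a => //= l a IHa /IHa; apply: embeds_sub_step. Qed.

Lemma embeds_right_act (a : seq 'I_k) (P Q : seq (tile R d n)) :
  embeds P Q -> embeds (right_act xi sigma P a) (right_act xi sigma Q a).
Proof. by elim: a P Q => //= l a IHa P Q /(embeds_sub_step l); apply: IHa. Qed.

Lemma right_act_cat (P : seq (tile R d n)) (a b : seq 'I_k) :
  right_act xi sigma P (a ++ b) = right_act xi sigma (right_act xi sigma P a) b.
Proof. exact: foldl_cat. Qed.

Lemma right_actE (P : seq (tile R d n)) (a : seq 'I_k) :
  right_act xi sigma P a = left_act xi sigma (rev a) P.
Proof. by rewrite -{1}(revK a) /right_act foldl_rev. Qed.

Hypothesis sigma_neq0 : forall l i, sigma l i != [::].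

Lemma sub_step_neq0 (l : 'I_k) (P : seq (tile R d n)) :
  P != [::] -> sub_step xi sigma l P != [::].
Proof.
case: P => // x P _; rewrite /sub_step /subst_patch /= -size_eq0 size_cat size_map.
by move: (sigma_neq0 l x.1); rewrite -size_eq0; case: size.
Qed.

Lemma right_act_neq0 (P : seq (tile R d n)) (a : seq 'I_k) :
  P != [::] -> right_act xi sigma P a != [::].
Proof. by elim: a P => //= l a IHa P /(sub_step_neq0 l); apply: IHa. Qed.

Lemma uniformly_primitive_embeds (m0 : nat) :
  (forall a : seq 'I_k, size a = m0 ->
     forall i j, exists x, x \in left_act xi sigma a (proto_patch R d i) /\ x.1 = j) ->
  forall (a : seq 'I_k) (P : seq (tile R d n)) (i : 'I_n),
    size a = m0 -> P != [::] -> embeds (proto_patch R d i) (right_act xi sigma P a).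
Proof.
move=> up a P i sz_a; case: P => // x P _; rewrite right_actE.
have [y [y_in <-]] := up (rev a) (etrans (size_rev a) sz_a) x.1 i.
apply: embeds_trans (proto_patch_embeds y_in) _.
by apply/embeds_left_act/proto_patch_embeds; rewrite mem_head.
Qed.

End Embedding.

Lemma subst_rule_neq0 (R : realType) (d n : nat) (T : 'I_n -> set 'rV[R]_d)
    (xi : R) (sigma : 'I_n -> seq (tile R d n)) (i : 'I_n) :
  is_subst_rule T xi sigma -> T i !=set0 -> sigma i != [::].
Proof.
move=> [_ /(_ i) [_ supp_sigma]] [x Tix]; apply/eqP => sigma_nil.
have : dilate xi (T i) (xi *: x) by exists x.
by rewrite -supp_sigma sigma_nil => -[].
Qed.

Lemma prefix_word_block (k : nat) (w : nat -> 'I_k) (J : nat) (s : seq 'I_k) :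
  (forall l, (l < size s)%N -> w (J + l)%N = nth (w 0%N) s l) ->
  prefix_word w (J + size s) = prefix_word w J ++ s.
Proof.
move=> w_block; rewrite /prefix_word iotaD map_cat add0n; congr (_ ++ _).
apply: (@eq_from_nth _ (w 0%N)); rewrite size_map size_iota // => l lt_l_s.
by rewrite (nth_map 0%N) ?size_iota // nth_iota // w_block.
Qed.

Section Words.
Variables (R : realType) (d n : nat) (T : 'I_n -> set 'rV[R]_d).
Variables (k : nat) (xi : 'I_k -> R) (sigma : 'I_k -> 'I_n -> seq (tile R d n)).
Hypothesis tile_T : forall i, is_tile (T i).
Hypothesis mixed_sigma : mixed_subst_system T xi sigma.
Hypothesis up_sigma : uniformly_primitive xi sigma.

Lemma R_w_embeds (v w : nat -> 'I_k) (Q : seq (tile R d n)) :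
  Omega_tilde w -> R_w xi sigma v Q -> exists2 Q', R_w xi sigma w Q' & embeds Q Q'.
Proof.
move=> w_rich [i [m ->]]; have [m0 up] := up_sigma.
have sigma_neq0 l j : sigma l j != [::].
  by apply: (subst_rule_neq0 (mixed_sigma l).1); case: (tile_T j).
pose a := nseq m0 (w 0%N); pose s := a ++ prefix_word v m.
have [J w_block] := w_rich s.
exists (right_act xi sigma (proto_patch R d i) (prefix_word w (J + size s))).
  by exists i, (J + size s)%N.
rewrite prefix_word_block // !right_act_cat; apply: embeds_right_act.
apply: (uniformly_primitive_embeds up); first exact: size_nseq.
exact: right_act_neq0.
Qed.

Lemma Y_w_subset (v w : nat -> 'I_k) :
  Omega_tilde w -> Y_w T xi sigma v `<=` Y_w T xi sigma w.
Proof.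
move=> w_rich Ti [tiling_Ti Ti_patches]; split=> // P P_Ti.
have [Q [t [Rv_Q PQ]]] := Ti_patches P P_Ti.
have [Q' Rw_Q' [u QQ']] := R_w_embeds w_rich Rv_Q.
by exists Q', (t + u); split=> // x /PQ /QQ'; rewrite /shift_tile /= addrA.
Qed.

End Words.

Theorem lemma6p1 (R : realType) (d n : nat) (T : 'I_n -> set 'rV[R]_d)
  (k : nat) (xi : 'I_k -> R) (sigma : 'I_k -> 'I_n -> seq (tile R d n)) :
  (forall i, is_tile (T i)) ->
  mixed_subst_system T xi sigma ->
  uniformly_primitive xi sigma ->
  forall w, Omega_tilde w -> Y_Omega T xi sigma = Y_w T xi sigma w.
Proof.
move=> tile_T mixed_sigma up_sigma w w_rich; apply/seteqP; split.
- by move=> Ti [v _]; apply: Y_w_subset.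
- by move=> Ti Yw_Ti; exists w.
Qed.
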